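(* Let $\mathcal{N}_{A'B'\to AB}$ be a bipartite replacer channel, $\mathcal{N}(\rho_{A'B'})=\operatorname{Tr}[\rho_{A'B'}]\,\omega_{AB}$ for a fixed state $\omega_{AB}$. Then $$E_N(\mathcal{N})=E_N(\omega_{AB}),\qquad \mathbf{R}(\mathcal{N})=\mathbf{R}(\omega_{AB}).$$
   Context: $T_X$ is the partial transpose on $X$. For a state, $E_N(\omega_{AB})=\log\|T_B(\omega_{AB})\|_1$. For a bipartite map (Alice: $A',A$; Bob: $B',B$), $E_N(\mathcal{M})=\log\|T_B\circ\mathcal{M}\circ T_{B'}\|_\diamond$ with $\|\mathcal{P}\|_\diamond=\sup_\psi\|(\mathrm{id}_{S_AS_B}\otimes\mathcal{P})(\psi_{S_AA'B'S_B})\|_1$ over pure states. $\mathbf{D}$ is a generalized divergence: a function $\mathbf{D}(\rho\|\sigma)$ ($\rho$ a state, $\sigma\ge0$) obeying $\mathbf{D}(\rho\|\sigma)\ge\mathbf{D}(\mathcal{E}(\rho)\|\mathcal{E}(\sigma))$ for all channels $\mathcal{E}$. Generalized channel divergence: $\mathbf{D}(\mathcal{N}\|\mathcal{M})=\sup_{\psi}\mathbf{D}((\mathrm{id}\otimes\mathcal{N})(\psi_{S_AA'B'S_B})\|(\mathrm{id}\otimes\mathcal{M})(\psi_{S_AA'B'S_B}))$ over pure states with $S_A\simeq A'$, $S_B\simeq B'$. Generalized Rains information of a bipartite channel: $\mathbf{R}(\mathcal{N})=\inf_{\mathcal{M}:E_N(\mathcal{M})\le0}\mathbf{D}(\mathcal{N}\|\mathcal{M})$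 over completely positive bipartite maps $\mathcal{M}_{A'B'\to AB}$. Generalized Rains relative entropy of a state: $\mathbf{R}(\omega_{AB})=\inf\{\mathbf{D}(\omega_{AB}\|\sigma_{AB}):\sigma_{AB}\ge0,\ E_N(\sigma_{AB})\le0\}$. *)

From Stdlib Require Import Reals Lra ClassicalEpsilon.
Open Scope R_scope.

Definition C := (R * R)%type.
Definition Cre (z : C) : R := fst z.
Definition Cim (z : C) : R := snd z.
Definition C0 : C := (0, 0).
Definition C1 : C := (1, 0).
Definition Cadd (z w : C) : C := (fst z + fst w, snd z + snd w).
Definition Cmul (z w : C) : C :=
  (fst z * fst w - snd z * snd w, fst z * snd w + snd z * fst w).
Definition Cconj (z : C) : C := (fst z, - snd z).

Fixpoint csum (n : nat) (f : nat -> C) : C :=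
  match n with O => C0 | S k => Cadd (csum k f) (f k) end.

(** * Matrices: an n x n matrix is given by its entries with indices < n;
    entries outside the range are ignored (compare with [meq]). *)
Definition Mat := nat -> nat -> C.
Definition Vec := nat -> C.

Definition meq (n : nat) (X Y : Mat) : Prop :=
  forall i j, (i < n)%nat -> (j < n)%nat -> X i j = Y i j.
Definition madd (X Y : Mat) : Mat := fun i j => Cadd (X i j) (Y i j).
Definition mscale (c : C) (X : Mat) : Mat := fun i j => Cmul c (X i j).
Definition mmul (n : nat) (X Y : Mat) : Mat :=
  fun i j => csum n (fun k => Cmul (X i k) (Y k j)).
Definition madj (X : Mat) : Mat := fun i j => Cconj (X j i).
Definition mtrace (n : nat) (X : Mat) : C := csum n (fun i => X i i).

Definition quad (n : nat) (X : Mat) (v : Vec) : C :=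
  csum n (fun i => csum n (fun j => Cmul (Cconj (v i)) (Cmul (X i j) (v j)))).

Definition psd (n : nat) (X : Mat) : Prop :=
  (forall i j, (i < n)%nat -> (j < n)%nat -> X i j = Cconj (X j i)) /\
  (forall v : Vec, 0 <= Cre (quad n X v)).

Definition state (n : nat) (X : Mat) : Prop := psd n X /\ mtrace n X = C1.

Definition unit_vec (n : nat) (v : Vec) : Prop :=
  Cre (csum n (fun i => Cmul (Cconj (v i)) (v i))) = 1.
Definition proj (v : Vec) : Mat := fun i j => Cmul (v i) (Cconj (v j)).

(** * Tensor products.  The index of |i> (x) |j> in C^a (x) C^b is i*b+j. *)

(** partial transpose on the second factor of C^a (x) C^b:
    (T_B X)[(i,j),(k,l)] = X[(i,l),(k,j)] *)
Definition ptB (a b : nat) (X : Mat) : Mat :=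
  fun p q => X ((p / b) * b + q mod b)%nat ((q / b) * b + p mod b)%nat.

(** (id_k (x) E)(X) for a linear map E from n x n to m x m matrices *)
Definition idtensor (k n m : nat) (E : Mat -> Mat) (X : Mat) : Mat :=
  fun p q => E (fun a b => X ((p / m) * n + a)%nat ((q / m) * n + b)%nat)
               (p mod m) (q mod m).

Definition lin_map (n m : nat) (E : Mat -> Mat) : Prop :=
  (forall X Y, meq n X Y -> meq m (E X) (E Y)) /\
  (forall X Y, meq m (E (madd X Y)) (madd (E X) (E Y))) /\
  (forall c X, meq m (E (mscale c X)) (mscale c (E X))).

Definition CP (n m : nat) (E : Mat -> Mat) : Prop :=
  lin_map n m E /\
  forall (k : nat) (X : Mat), psd (k * n)%nat X -> psd (k * m)%nat (idtensor k n m E X).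

Definition TP (n m : nat) (E : Mat -> Mat) : Prop :=
  forall X, mtrace m (E X) = mtrace n X.

Definition channel (n m : nat) (E : Mat -> Mat) : Prop := CP n m E /\ TP n m E.

Definition trace_norm (n : nat) (X : Mat) : R :=
  epsilon (inhabits 0) (fun t => exists Y, psd n Y /\
     meq n (mmul n Y Y) (mmul n (madj X) X) /\ t = Cre (mtrace n Y)).

Inductive Rbar := Fin (r : R) | PInf | MInf.
Definition Rbar_le (x y : Rbar) : Prop :=
  match x, y with
  | MInf, _ => True
  | _, PInf => True
  | Fin a, Fin b => a <= b
  | _, _ => False
  end.
Definition is_sup (S : Rbar -> Prop) (s : Rbar) : Prop :=
  (forall x, S x -> Rbar_le x s) /\
  (forall u, (forall x, S x -> Rbar_le x u) -> Rbar_le s u).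
Definition is_inf (S : Rbar -> Prop) (s : Rbar) : Prop :=
  (forall x, S x -> Rbar_le s x) /\
  (forall u, (forall x, S x -> Rbar_le u x) -> Rbar_le u s).
Definition Rbar_sup (S : Rbar -> Prop) : Rbar := epsilon (inhabits MInf) (is_sup S).
Definition Rbar_inf (S : Rbar -> Prop) : Rbar := epsilon (inhabits MInf) (is_inf S).
Definition Rbar_ln (x : Rbar) : Rbar :=
  match x with
  | Fin r => if Rlt_dec 0 r then Fin (ln r) else MInf
  | PInf => PInf
  | MInf => MInf
  end.

(** * Diamond norm of a map P from n x n to m x m matrices:
    sup over pure states on S (x) (input), S = S_A S_B of arbitrary dimension. *)
Definition diamond (n m : nat) (P : Mat -> Mat) : Rbar :=
  Rbar_sup (fun x => exists (sA sB : nat) (v : Vec),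
     (0 < sA)%nat /\ (0 < sB)%nat /\ unit_vec ((sA * sB) * n)%nat v /\
     x = Fin (trace_norm ((sA * sB) * m)%nat (idtensor (sA * sB)%nat n m P (proj v)))).

Definition EN_map (dA' dB' dA dB : nat) (M : Mat -> Mat) : Rbar :=
  Rbar_ln (diamond (dA' * dB')%nat (dA * dB)%nat (fun X => ptB dA dB (M (ptB dA' dB' X)))).
Definition EN_state (dA dB : nat) (w : Mat) : Rbar :=
  Rbar_ln (Fin (trace_norm (dA * dB)%nat (ptB dA dB w))).

(** * Generalized divergences: D n rho sigma, for n x n matrices *)
Definition Div := nat -> Mat -> Mat -> Rbar.
Definition gen_div (D : Div) : Prop :=
  forall (n m : nat) (E : Mat -> Mat) (rho sigma : Mat),
    channel n m E -> state n rho -> psd n sigma ->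
    Rbar_le (D m (E rho) (E sigma)) (D n rho sigma).

(** generalized channel divergence, reference S = S_A S_B with S_A ~ A', S_B ~ B'
    (so dim S = n = dim A'B') *)
Definition chan_div (D : Div) (n m : nat) (N M : Mat -> Mat) : Rbar :=
  Rbar_sup (fun x => exists v : Vec, unit_vec (n * n)%nat v /\
     x = D (n * m)%nat (idtensor n n m N (proj v)) (idtensor n n m M (proj v))).

Definition rains_map (D : Div) (dA' dB' dA dB : nat) (N : Mat -> Mat) : Rbar :=
  Rbar_inf (fun x => exists M : Mat -> Mat,
     CP (dA' * dB')%nat (dA * dB)%nat M /\ Rbar_le (EN_map dA' dB' dA dB M) (Fin 0) /\
     x = chan_div D (dA' * dB')%nat (dA * dB)%nat N M).

Definition rains_state (D : Div) (dA dB : nat) (w : Mat) : Rbar :=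
  Rbar_inf (fun x => exists sigma : Mat,
     psd (dA * dB)%nat sigma /\ Rbar_le (EN_state dA dB sigma) (Fin 0) /\
     x = D (dA * dB)%nat w sigma).

Definition replacer (n : nat) (w : Mat) : Mat -> Mat :=
  fun X => mscale (mtrace n X) w.

(** The whole argument rests on one identity: for any input [X] on [S (x) A'B'],
    [(id_S (x) N)(X) = Tr_{A'B'}[X] (x) w] (Lemma [idtensor_replacer]).
    - Log-negativity.  [T_B o N o T_B'] is again a replacer, with output [T_B w].
      Every value in its diamond norm is [||rho (x) T_B w||_1 = ||T_B w||_1] with [rho]
      the marginal of the pure input, so the supremum is [||T_B w||_1].
    - Rains information, [<=]: for [sigma] with [E_N(sigma) <= 0], the replacer with
      output [sigma] is admissible, and both channel outputs are obtained from [(w, sigma)]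
      by appending [rho], so data processing bounds the channel divergence by [D(w||sigma)].
    - Rains information, [>=]: for an admissible [M], feed [|00><00|] and trace out the
      reference; this channel maps the outputs to [w] and to [M(|0><0|)], which is
      positive and has [E_N <= 0] because [T_B' |0><0| = |0><0|]. *)

From Stdlib Require Import Reals Lra Lia ClassicalEpsilon FunctionalExtensionality.
From mathcomp Require all_boot all_algebra Rstruct complex spectral sesquilinear ring.
From Pilot Require Import Defs.
Open Scope R_scope.

Definition Copp (z : C) : C := (- fst z, - snd z).
Definition Csub (a b : C) : C := Cadd a (Copp b).

Ltac destruct_C := repeat match goal with z : C |- _ => destruct z end.

Lemma C_ring : ring_theory C0 C1 Cadd Cmul Csub Copp (@eq C).
Proof.
  constructor; intros; destruct_C; unfold Csub, Cadd, Cmul, Copp, C0, C1; simpl;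
  f_equal; ring.
Qed.
Add Ring C_ring : C_ring.

Lemma Cconj_add a b : Cconj (Cadd a b) = Cadd (Cconj a) (Cconj b).
Proof. destruct_C; unfold Cconj, Cadd; simpl; f_equal; ring. Qed.
Lemma Cconj_mul a b : Cconj (Cmul a b) = Cmul (Cconj a) (Cconj b).
Proof. destruct_C; unfold Cconj, Cmul; simpl; f_equal; ring. Qed.
Lemma Cconj_opp a : Cconj (Copp a) = Copp (Cconj a).
Proof. destruct_C; unfold Cconj, Copp; simpl; f_equal; ring. Qed.
Lemma Cconj_invol a : Cconj (Cconj a) = a.
Proof. destruct_C; unfold Cconj; simpl; f_equal; ring. Qed.
Lemma Cconj_C0 : Cconj C0 = C0.
Proof. unfold Cconj, C0; simpl; f_equal; ring. Qed.

Lemma Cre_add a b : Cre (Cadd a b) = Cre a + Cre b. Proof. reflexivity. Qed.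
Lemma Cim_add a b : Cim (Cadd a b) = Cim a + Cim b. Proof. reflexivity. Qed.

Lemma Cnorm_re z : Cre (Cmul (Cconj z) z) = fst z * fst z + snd z * snd z.
Proof. destruct_C; unfold Cre, Cmul, Cconj; simpl; ring. Qed.
Lemma Cnorm_im z : Cim (Cmul (Cconj z) z) = 0.
Proof. destruct_C; unfold Cim, Cmul, Cconj; simpl; ring. Qed.
Lemma Cnorm_nonneg z : 0 <= Cre (Cmul (Cconj z) z).
Proof. rewrite Cnorm_re; nra. Qed.
Lemma Cnorm_zero z : Cre (Cmul (Cconj z) z) = 0 -> z = C0.
Proof. rewrite Cnorm_re; intros; destruct z; unfold C0; simpl in *; f_equal; nra. Qed.

Lemma csum_ext n f g : (forall i, (i < n)%nat -> f i = g i) -> csum n f = csum n g.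
Proof.
  induction n; intros H; simpl; auto.
  rewrite IHn, H; auto; intros; apply H; lia.
Qed.

Lemma csum_add n f g : csum n (fun i => Cadd (f i) (g i)) = Cadd (csum n f) (csum n g).
Proof. induction n; simpl; [unfold C0, Cadd; simpl; f_equal; ring | rewrite IHn; ring]. Qed.

Lemma csum_mul_l n c f : csum n (fun i => Cmul c (f i)) = Cmul c (csum n f).
Proof. induction n; simpl; [unfold C0, Cmul; simpl; f_equal; ring | rewrite IHn; ring]. Qed.

Lemma csum_mul_r n c f : csum n (fun i => Cmul (f i) c) = Cmul (csum n f) c.
Proof. induction n; simpl; [unfold C0, Cmul; simpl; f_equal; ring | rewrite IHn; ring]. Qed.

Lemma csum_opp n f : csum n (fun i => Copp (f i)) = Copp (csum n f).
Proof. induction n; simpl; [unfold C0, Copp; simpl; f_equal; ring | rewrite IHn; ring]. Qed.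

Lemma csum_conj n f : Cconj (csum n f) = csum n (fun i => Cconj (f i)).
Proof. induction n; simpl; [apply Cconj_C0 | rewrite Cconj_add, IHn; auto]. Qed.

Lemma csum_zero n f : (forall i, (i < n)%nat -> f i = C0) -> csum n f = C0.
Proof. intros H; rewrite (csum_ext n f (fun _ => Cmul C0 C0)), csum_mul_l by (intros; rewrite H by auto; ring); ring. Qed.

Lemma csum_swap n m (f : nat -> nat -> C) :
  csum n (fun i => csum m (fun j => f i j)) = csum m (fun j => csum n (fun i => f i j)).
Proof.
  induction n; simpl.
  - symmetry; apply csum_zero; auto.
  - rewrite IHn, <- csum_add; auto.
Qed.

Lemma csum_mul2 n m f g :
  Cmul (csum n f) (csum m g) = csum n (fun i => csum m (fun j => Cmul (f i) (g j))).
Proof.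
  rewrite <- csum_mul_r. apply csum_ext; intros i Hi. rewrite csum_mul_l; reflexivity.
Qed.

Lemma csum_prod a b f :
  csum (a * b) f = csum a (fun i => csum b (fun j => f (i * b + j)%nat)).
Proof.
  assert (Hplus : forall a b f, csum (a + b) f = Cadd (csum a f) (csum b (fun j => f (a + j)%nat))).
  { clear; intros a b f; induction b; simpl.
    - rewrite Nat.add_0_r; ring.
    - rewrite Nat.add_succ_r; simpl; rewrite IHb; ring. }
  induction a; simpl; auto.
  rewrite Nat.add_comm, Hplus, IHa; auto.
Qed.

Lemma csum_single n j f : (j < n)%nat -> (forall i, (i < n)%nat -> i <> j -> f i = C0) ->
  csum n f = f j.
Proof.
  induction n; intros Hj H; [lia|]; simpl.
  destruct (Nat.eq_dec j n).
  - subst. rewrite csum_zero by (intros; apply H; lia). ring.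
  - rewrite IHn, (H n) by (auto; lia). ring.
Qed.

Lemma csum_re_nonneg n f : (forall i, (i < n)%nat -> 0 <= Cre (f i)) -> 0 <= Cre (csum n f).
Proof.
  induction n; intros H; cbn [csum]; [unfold Cre, C0; simpl; lra|].
  rewrite Cre_add. specialize (IHn (fun i Hi => H i ltac:(lia))). specialize (H n ltac:(lia)). lra.
Qed.

Lemma csum_re_zero n f : (forall i, (i < n)%nat -> 0 <= Cre (f i)) -> Cre (csum n f) = 0 ->
  forall i, (i < n)%nat -> Cre (f i) = 0.
Proof.
  induction n; intros H Hs i Hi; [lia|]. cbn [csum] in Hs. rewrite Cre_add in Hs.
  assert (0 <= Cre (f n)) by (apply H; lia).
  assert (0 <= Cre (csum n f)) by (apply csum_re_nonneg; intros; apply H; lia).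
  destruct (Nat.eq_dec i n); [subst; lra|].
  apply IHn; [intros; apply H; lia | lra | lia].
Qed.

Lemma csum_real n f : (forall i, (i < n)%nat -> Cim (f i) = 0) -> Cim (csum n f) = 0.
Proof.
  induction n; intros H; cbn [csum]; [reflexivity|].
  rewrite Cim_add, IHn, H by (auto; lia). lra.
Qed.

Lemma divmod_comb c m i : (i < m)%nat -> ((c * m + i) / m = c /\ (c * m + i) mod m = i)%nat.
Proof.
  intros H. split.
  - rewrite Nat.div_add_l, Nat.div_small by lia. lia.
  - rewrite Nat.add_comm, Nat.Div0.mod_add. apply Nat.mod_small; auto.
Qed.
Lemma divmod_lt p k m : (p < k * m)%nat -> (p / m < k /\ p mod m < m)%nat.
Proof.
  intros H. split.
  - apply Nat.Div0.div_lt_upper_bound. lia.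
  - apply Nat.mod_upper_bound. lia.
Qed.
Lemma divmod_id p b : ((p / b) * b + p mod b = p)%nat.
Proof. rewrite Nat.mul_comm, <- Nat.div_mod_eq. reflexivity. Qed.

Definition herm (n : nat) (X : Mat) : Prop :=
  forall i j, (i < n)%nat -> (j < n)%nat -> X i j = Cconj (X j i).
Definition bil (n : nat) (X : Mat) (u w : Vec) : C :=
  csum n (fun i => csum n (fun j => Cmul (Cconj (u i)) (Cmul (X i j) (w j)))).
Definition mv (n : nat) (X : Mat) (v : Vec) : Vec :=
  fun i => csum n (fun j => Cmul (X i j) (v j)).

Lemma psd_herm n X : psd n X -> herm n X. Proof. intros [H _]; exact H. Qed.

Lemma quad_mv n X v : quad n X v = csum n (fun i => Cmul (Cconj (v i)) (mv n X v i)).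
Proof. unfold quad, mv; apply csum_ext; intros; apply csum_mul_l. Qed.

Lemma quad_meq n X Y v : meq n X Y -> quad n X v = quad n Y v.
Proof.
  intros H; unfold quad; apply csum_ext; intros i Hi; apply csum_ext; intros j Hj.
  rewrite H; auto.
Qed.

Lemma psd_meq n X Y : psd n X -> meq n X Y -> psd n Y.
Proof.
  intros [H1 H2] H; split.
  - intros i j Hi Hj; rewrite <- !H by auto; auto.
  - intros v; rewrite <- (quad_meq n X Y v H); auto.
Qed.

Lemma bil_conj n X u w : herm n X -> Cconj (bil n X u w) = bil n X w u.
Proof.
  intros H; unfold bil. rewrite csum_conj, csum_swap.
  apply csum_ext; intros j Hj; rewrite csum_conj; apply csum_ext; intros i Hi.
  rewrite !Cconj_mul, Cconj_invol, (H i j) by auto. ring.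
Qed.

Lemma quad_real n X v : herm n X -> Cim (quad n X v) = 0.
Proof.
  intros H. pose proof (bil_conj n X v v H) as E. change (quad n X v) with (bil n X v v).
  destruct (bil n X v v) as [a b]; unfold Cconj in E; simpl in E.
  injection E; intros; unfold Cim; simpl; lra.
Qed.

Lemma quad_expand n X x y t :
  Cre (quad n X (fun i => Cadd (x i) (Cmul (t, 0) (y i)))) =
  Cre (quad n X x) + t * (Cre (bil n X x y) + Cre (bil n X y x)) + t * t * Cre (quad n X y).
Proof.
  assert (E : quad n X (fun i => Cadd (x i) (Cmul (t, 0) (y i))) =
    Cadd (quad n X x) (Cadd (Cmul (t, 0) (Cadd (bil n X x y) (bil n X y x)))
                            (Cmul (t * t, 0) (quad n X y)))).
  { assert (Hlin : forall a b c d s1 s2,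
      csum n (fun j => Cadd (a j) (Cadd (Cmul s1 (Cadd (b j) (c j))) (Cmul s2 (d j)))) =
      Cadd (csum n a) (Cadd (Cmul s1 (Cadd (csum n b) (csum n c))) (Cmul s2 (csum n d)))).
    { intros. rewrite !csum_add, !csum_mul_l, !csum_add. reflexivity. }
    unfold quad, bil. rewrite <- Hlin. apply csum_ext; intros i Hi.
    rewrite <- Hlin. apply csum_ext; intros j Hj.
    rewrite Cconj_add, Cconj_mul.
    replace (Cconj (t, 0)) with ((t, 0) : C) by (unfold Cconj; simpl; f_equal; ring).
    replace ((t * t, 0) : C) with (Cmul (t, 0) (t, 0)) by (unfold Cmul; simpl; f_equal; ring).
    ring. }
  rewrite E. destruct (quad n X x), (bil n X x y), (bil n X y x), (quad n X y).
  unfold Cre, Cadd, Cmul; simpl; ring.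
Qed.

(** A vector on which a positive semidefinite form vanishes lies in its kernel:
    otherwise [<x - t Xx| X |x - t Xx>] would be negative for small [t > 0]. *)
Lemma psd_kernel n X x : psd n X -> Cre (quad n X x) = 0 ->
  forall i, (i < n)%nat -> mv n X x i = C0.
Proof.
  intros [Hh Hp] H0.
  set (y := mv n X x).
  assert (Hb : bil n X y x = csum n (fun i => Cmul (Cconj (y i)) (y i))).
  { unfold bil; apply csum_ext; intros i Hi. apply csum_mul_l. }
  assert (Hre : Cre (bil n X x y) = Cre (bil n X y x)).
  { rewrite <- (bil_conj n X x y Hh). destruct (bil n X x y); reflexivity. }
  set (N := Cre (bil n X y x)).
  assert (HN : 0 <= N).
  { unfold N; rewrite Hb; apply csum_re_nonneg; intros; apply Cnorm_nonneg. }
  set (c := Cre (quad n X y)).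
  assert (Hc : 0 <= c) by apply Hp.
  assert (Ht : forall t, 0 <= 2 * t * N + t * t * c).
  { intros t. pose proof (Hp (fun i => Cadd (x i) (Cmul (t, 0) (y i)))) as Q.
    rewrite quad_expand, Hre in Q. fold N c in Q. nra. }
  assert (HN0 : N = 0).
  { pose proof (Ht (- N / (c + 1))) as T.
    replace (2 * (- N / (c + 1)) * N + (- N / (c + 1)) * (- N / (c + 1)) * c)
      with (- (N * N * (c + 2) / ((c + 1) * (c + 1)))) in T by (field; lra).
    destruct (Req_dec N 0); auto.
    assert (N * N * (c + 2) / ((c + 1) * (c + 1)) > 0)
      by (apply Rdiv_lt_0_compat; nra).
    lra. }
  intros i Hi. apply Cnorm_zero.
  apply (csum_re_zero n (fun i => Cmul (Cconj (y i)) (y i))); auto.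
  - intros; apply Cnorm_nonneg.
  - rewrite <- Hb; auto.
Qed.

Definition push (N : nat) (g : nat -> nat) (a : Vec) : Vec :=
  fun j => csum N (fun p => if Nat.eq_dec (g p) j then a p else C0).

Lemma csum_push N q g a f : (forall p, (p < N)%nat -> (g p < q)%nat) ->
  csum q (fun j => Cmul (push N g a j) (f j)) = csum N (fun p => Cmul (a p) (f (g p))).
Proof.
  intros Hg. unfold push.
  rewrite (csum_ext q _ (fun j => csum N (fun p =>
     Cmul (if Nat.eq_dec (g p) j then a p else C0) (f j)))) by (intros; apply eq_sym, csum_mul_r).
  rewrite csum_swap. apply csum_ext; intros p Hp.
  rewrite (csum_single q (g p)); auto.
  - destruct (Nat.eq_dec (g p) (g p)); [reflexivity | congruence].
  - intros j Hj Hne. destruct (Nat.eq_dec (g p) j); [congruence | ring].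
Qed.

Lemma push_conj N g a j : Cconj (push N g a j) = push N g (fun p => Cconj (a p)) j.
Proof.
  unfold push. rewrite csum_conj. apply csum_ext; intros p _.
  destruct (Nat.eq_dec (g p) j); [reflexivity | apply Cconj_C0].
Qed.

Lemma quad_reindex N q Z g a : (forall p, (p < N)%nat -> (g p < q)%nat) ->
  quad N (fun p p' => Z (g p) (g p')) a = quad q Z (push N g a).
Proof.
  intros Hg. rewrite !quad_mv.
  rewrite (csum_ext q _ (fun j => Cmul (push N g (fun p => Cconj (a p)) j) (mv q Z (push N g a) j)))
    by (intros; rewrite push_conj; reflexivity).
  rewrite csum_push by auto. apply csum_ext; intros p Hp. f_equal.
  unfold mv. rewrite (csum_ext q _ (fun j => Cmul (push N g a j) (Z (g p) j))) by (intros; ring).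
  rewrite csum_push by auto. apply csum_ext; intros; ring.
Qed.

Lemma psd_reindex N q Z g : psd q Z -> (forall p, (p < N)%nat -> (g p < q)%nat) ->
  psd N (fun p p' => Z (g p) (g p')).
Proof.
  intros HZ Hg. split.
  - intros p p' Hp Hp'. apply (psd_herm q Z HZ); auto.
  - intros a. rewrite (quad_reindex N q) by auto. apply HZ.
Qed.

Lemma psd_csum S N (F : nat -> Mat) : (forall s, (s < S)%nat -> psd N (F s)) ->
  psd N (fun p p' => csum S (fun s => F s p p')).
Proof.
  intros HF. split.
  - intros p p' Hp Hp'. rewrite csum_conj. apply csum_ext; intros s Hs.
    apply (psd_herm N (F s) (HF s Hs)); auto.
  - intros u. replace (quad N _ u) with (csum S (fun s => quad N (F s) u)).
    + apply csum_re_nonneg; intros s Hs. apply HF; auto.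
    + unfold quad. rewrite csum_swap. apply csum_ext; intros p Hp.
      rewrite csum_swap. apply csum_ext; intros p' Hp'.
      rewrite <- csum_mul_r, <- csum_mul_l. reflexivity.
Qed.

Lemma proj_psd n v : psd n (proj v).
Proof.
  split.
  - intros i j Hi Hj. unfold proj. rewrite Cconj_mul, Cconj_invol. ring.
  - intros u. unfold quad, proj.
    set (t := csum n (fun j => Cmul (Cconj (v j)) (u j))).
    replace (csum n _) with (Cmul (Cconj t) t); [apply Cnorm_nonneg|].
    unfold t. rewrite csum_conj, csum_mul2. apply csum_ext; intros i Hi.
    apply csum_ext; intros j Hj. rewrite Cconj_mul, Cconj_invol. ring.
Qed.

Lemma unit_trace n v : unit_vec n v -> mtrace n (proj v) = C1.
Proof.
  intros Hu. unfold unit_vec in Hu. unfold mtrace, proj.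
  rewrite (csum_ext n _ (fun i => Cmul (Cconj (v i)) (v i))) by (intros; ring).
  assert (Him : Cim (csum n (fun i => Cmul (Cconj (v i)) (v i))) = 0)
    by (apply csum_real; intros; apply Cnorm_im).
  destruct (csum n _) as [re im]. unfold Cre, Cim in *; simpl in *. subst. reflexivity.
Qed.

Lemma mmul_meq n A A' B B' : meq n A A' -> meq n B B' ->
  meq n (mmul n A B) (mmul n A' B').
Proof.
  intros H1 H2 i j Hi Hj; unfold mmul; apply csum_ext; intros k Hk.
  rewrite H1, H2 by auto; reflexivity.
Qed.

Lemma madj_meq n X X' : meq n X X' -> meq n (madj X) (madj X').
Proof. intros H i j Hi Hj; unfold madj; rewrite H; auto. Qed.

Lemma gram_psd n X : psd n (mmul n (madj X) X).
Proof.
  apply psd_meq with (X := fun i j => csum n (fun k => Cmul (Cconj (X k i)) (X k j))).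
  - apply psd_csum; intros k Hk.
    apply psd_meq with (X := proj (fun i => Cconj (X k i))); [apply proj_psd|].
    intros i j _ _. unfold proj. rewrite Cconj_invol. reflexivity.
  - intros i j _ _. reflexivity.
Qed.

Module SpectralRoot.
Import all_boot all_algebra Rstruct complex spectral sesquilinear ring.
Import GRing.Theory Num.Theory.
Local Open Scope ring_scope.
Local Open Scope sesquilinear_scope.

Local Notation CC := (complex Rdefinitions.R).
Definition toC (z : Defs.C) : CC := Complex (fst z) (snd z).
Definition ofC (z : CC) : Defs.C := (complex.Re z, complex.Im z).

Lemma toCK z : ofC (toC z) = z. Proof. by case: z. Qed.
Lemma ofCK z : toC (ofC z) = z. Proof. by case: z. Qed.
Lemma toC_inj a b : toC a = toC b -> a = b.
Proof. by move=> h; rewrite -(toCK a) h toCK. Qed.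
Lemma toC_add a b : toC (Cadd a b) = toC a + toC b. Proof. by case: a; case: b. Qed.
Lemma toC_mul a b : toC (Cmul a b) = toC a * toC b. Proof. by case: a; case: b. Qed.
Lemma toC_conj a : toC (Cconj a) = (toC a)^*.
Proof. by case: a. Qed.

Lemma toC_csum n f : toC (csum n f) = \sum_(i < n) toC (f i).
Proof.
elim: n => [|n IH]; first by rewrite big_ord0.
by rewrite big_ord_recr /= toC_add IH.
Qed.

Lemma toC_quad n A v : toC (quad n A v) =
  \sum_(i < n) \sum_(j < n) (toC (v i))^* * (toC (A i j) * toC (v j)).
Proof.
rewrite /quad toC_csum; apply: eq_bigr => i _; rewrite toC_csum.
by apply: eq_bigr => j _; rewrite !toC_mul toC_conj.
Qed.

Section HermitianRoot.
Variables (n : nat) (AM : 'M[CC]_n).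
Hypothesis AM_herm : AM ^t* = AM.
Let P := spectralmx AM.
Let d := spectral_diag AM.

Lemma spectral_unitary : P *m P ^t* = 1%:M /\ P ^t* *m P = 1%:M.
Proof.
have Pu : P \is unitarymx by apply: spectral_unitarymx.
split; first by apply/unitarymxP.
by rewrite -invmx_unitary // mulVmx // spectral_unit.
Qed.

Lemma spectral_decomposition : AM = P ^t* *m diag_mx d *m P.
Proof.
rewrite -invmx_unitary ?spectral_unitarymx //; apply/orthomx_spectralP.
by apply/normalmxP; rewrite AM_herm.
Qed.

Lemma spectral_diagonalizes : P *m AM *m P ^t* = diag_mx d.
Proof.
have [PPt PtP] := spectral_unitary.
by rewrite {1}spectral_decomposition !mulmxA PPt mul1mx -mulmxA PPt mulmx1.
Qed.

Lemma herm_sqrt : (forall i, 0 <= d 0 i) ->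
  exists SM : 'M[CC]_n, SM *m SM = AM /\ SM ^t* = SM /\
    forall u : 'I_n -> CC, 0 <= \sum_(i < n) \sum_(j < n) (u i)^* * (SM i j * u j).
Proof.
move=> d_ge0; have [PPt PtP] := spectral_unitary.
pose s : 'rV[CC]_n := \row_i sqrtC (d 0 i).
have s_ge0 i : 0 <= s 0 i by rewrite mxE sqrtC_ge0.
have sK : map_mx Num.conj s = s by apply/rowP => i; rewrite !mxE geC0_conj // -[X in sqrtC X]/(d 0 i) sqrtC_ge0.
exists (P ^t* *m diag_mx s *m P); split; [|split].
- rewrite [RHS]spectral_decomposition !mulmxA -[_ *m P *m P ^t*]mulmxA PPt mulmx1.
  rewrite -!mulmxA [diag_mx s *m (_ *m _)]mulmxA mulmx_diag; congr (_ *m (diag_mx _ *m _)).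
  by apply/rowP => i; rewrite !mxE -expr2 sqrtCK.
- by rewrite !trmx_mul !map_mxM trmxCK tr_diag_mx map_diag_mx sK mulmxA.
- move=> u; pose w l := \sum_(k < n) P l k * u k.
  have -> : \sum_(i < n) \sum_(j < n) (u i)^* * ((P ^t* *m diag_mx s *m P) i j * u j)
          = \sum_(l < n) s 0 l * ((w l)^* * w l).
    under eq_bigr => i _ do under eq_bigr => j _ do
      rewrite mxE big_distrl big_distrr /=.
    under eq_bigr => i _ do rewrite exchange_big /=.
    rewrite exchange_big /=; apply: eq_bigr => l _.
    rewrite /w rmorph_sum big_distrl big_distrr /=; apply: eq_bigr => i _.
    rewrite big_distrr big_distrr /=; apply: eq_bigr => j _.
    by rewrite mul_mx_diag !mxE rmorphM /=; ring.
  apply: sumr_ge0 => l _; apply: mulr_ge0 => //.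
  by rewrite mulrC mul_conjC_ge0.
Qed.
End HermitianRoot.

Definition mx_of (n : nat) (A : Mat) : 'M[CC]_n := \matrix_(i, j) toC (A i j).

Lemma mx_of_herm n A : herm n A -> (mx_of n A) ^t* = mx_of n A.
Proof. by move=> A_herm; apply/matrixP => i j; rewrite !mxE -toC_conj -A_herm //; apply/ltP. Qed.

(** The spectral values of a positive semidefinite matrix are nonnegative reals: each
    is the quadratic form of [A] at a (conjugated) row of the unitary spectral basis. *)
Lemma psd_spectral_ge0 n A (i : 'I_n) : psd n A -> 0 <= spectral_diag (mx_of n A) 0 i.
Proof.
move=> [A_herm A_pos]; pose P := spectralmx (mx_of n A).
pose v k := if (k < n)%N then ofC ((P i (insubd i k))^*) else C0.
have -> : spectral_diag (mx_of n A) 0 i = toC (quad n A v).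
  have := congr1 (fun M : 'M_n => M i i) (spectral_diagonalizes _ _ (mx_of_herm n A A_herm)).
  rewrite /= !mxE eqxx mulr1n => <-.
  rewrite toC_quad exchange_big /=; apply: eq_bigr => k _.
  rewrite !mxE big_distrl /=; apply: eq_bigr => j _.
  by rewrite /v !ltn_ord !ofCK !valKd conjCK !mxE mulrA.
have := quad_real n A v A_herm; have := A_pos v.
by case: (quad n A v) => re im /= /RleP re_ge0 ->; rewrite lecE /= eqxx.
Qed.

Lemma psd_sqrt_exists (n : nat) (A : Mat) : psd n A -> exists Y, psd n Y /\ meq n (mmul n Y Y) A.
Proof.
case: n A => [|n'] A A_psd; first by exists A; split=> // i j /ltP.
set n := n'.+1 in A A_psd *.
have [SM [SMsq [SMh SMpos]]] :=
  herm_sqrt _ _ (mx_of_herm n A (psd_herm n A A_psd)) (fun i => psd_spectral_ge0 n A i A_psd).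
pose Y : Mat := fun j k => if (j < n)%N && (k < n)%N
                          then ofC (SM (inord j) (inord k)) else C0.
have YE (j k : 'I_n) : toC (Y j k) = SM j k by rewrite /Y !ltn_ord /= ofCK !inord_val.
exists Y; split; [split|].
- move=> j k /ltP hj /ltP hk; apply: toC_inj.
  rewrite toC_conj -[j]/(nat_of_ord (Ordinal hj)) -[k]/(nat_of_ord (Ordinal hk)) !YE.
  by rewrite -{1}SMh !mxE.
- move=> u; have := SMpos (fun i => toC (u i)).
  under eq_bigr => i _ do under eq_bigr => j _ do rewrite -YE.
  by rewrite -toC_quad lecE => /andP [_] /RleP.
- move=> j k /ltP hj /ltP hk; apply: toC_inj.
  rewrite /mmul toC_csum -[j]/(nat_of_ord (Ordinal hj)) -[k]/(nat_of_ord (Ordinal hk)).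
  have -> : toC (A (Ordinal hj) (Ordinal hk)) = mx_of n A (Ordinal hj) (Ordinal hk) by rewrite mxE.
  by rewrite -SMsq mxE; apply: eq_bigr => l _; rewrite toC_mul !YE.
Qed.

End SpectralRoot.

Definition msub (X Y : Mat) : Mat := fun i j => Csub (X i j) (Y i j).

Lemma mmul_msub_r n A B B' i j :
  mmul n A (msub B B') i j = Csub (mmul n A B i j) (mmul n A B' i j).
Proof. unfold mmul, msub, Csub. rewrite <- csum_opp, <- csum_add. apply csum_ext; intros; ring. Qed.

Lemma mmul_msub_l n A A' B i j :
  mmul n (msub A A') B i j = Csub (mmul n A B i j) (mmul n A' B i j).
Proof. unfold mmul, msub, Csub. rewrite <- csum_opp, <- csum_add. apply csum_ext; intros; ring. Qed.

(** A Hermitian matrix with [D^2 = 0] vanishes: the diagonal of [D D^dagger] holds the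
    squared norms of the rows. *)
Lemma herm_sq_zero n D : herm n D -> (forall k, (k < n)%nat -> mmul n D D k k = C0) ->
  forall i j, (i < n)%nat -> (j < n)%nat -> D i j = C0.
Proof.
  intros HD HDD i j Hi Hj. apply Cnorm_zero.
  apply (csum_re_zero n (fun j => Cmul (Cconj (D i j)) (D i j))); auto.
  - intros; apply Cnorm_nonneg.
  - rewrite (csum_ext n _ (fun j => Cmul (D i j) (D j i))).
    + change (Cre (mmul n D D i i) = 0). rewrite HDD by auto. reflexivity.
    + intros k Hk. rewrite <- (HD k i) by auto. ring.
Qed.

(** If [Y1^2 = Y2^2] for positive semidefinite [Y1, Y2] and [D = Y1 - Y2], then
    [Y1 D + D Y2 = 0]; summing the forms of [Y1] and [Y2] on the columns of [D] gives
    [0], so each column lies in both kernels: [Y1 D = Y2 D = 0]. *)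
Lemma psd_sqrt_diff_kernel n Y1 Y2 : psd n Y1 -> psd n Y2 ->
  meq n (mmul n Y1 Y1) (mmul n Y2 Y2) ->
  forall i k, (i < n)%nat -> (k < n)%nat ->
    mmul n Y1 (msub Y1 Y2) i k = C0 /\ mmul n Y2 (msub Y1 Y2) i k = C0.
Proof.
  intros P1 P2 HE. set (D := msub Y1 Y2).
  assert (HD : herm n D).
  { intros i j Hi Hj; unfold D, msub, Csub.
    rewrite (psd_herm n Y1 P1 i j), (psd_herm n Y2 P2 i j), Cconj_add, Cconj_opp by auto.
    reflexivity. }
  assert (E0 : forall i k, (i < n)%nat -> (k < n)%nat ->
             Cadd (mmul n Y1 D i k) (mmul n D Y2 i k) = C0).
  { intros i k Hi Hk. unfold D. rewrite mmul_msub_r, mmul_msub_l, (HE i k Hi Hk).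
    unfold Csub. ring. }
  set (col := fun k i : nat => D i k).
  assert (Q1 : forall k, (k < n)%nat ->
     quad n Y1 (col k) = csum n (fun i => Cmul (D k i) (mmul n Y1 D i k))).
  { intros k Hk. rewrite quad_mv. apply csum_ext; intros i Hi. unfold col.
    rewrite <- (HD k i) by auto. reflexivity. }
  assert (Q2 : forall k, (k < n)%nat ->
     quad n Y2 (col k) = csum n (fun j => Cmul (mmul n D Y2 k j) (D j k))).
  { intros k Hk. unfold quad, mmul, col. rewrite csum_swap. apply csum_ext; intros j Hj.
    rewrite <- csum_mul_r. apply csum_ext; intros i Hi.
    rewrite <- (HD k i) by auto. ring. }
  assert (Sum0 : csum n (fun k => Cadd (quad n Y1 (col k)) (quad n Y2 (col k))) = C0).
  { rewrite (csum_ext n _ (fun k => Cadd (csum n (fun i => Cmul (D k i) (mmul n Y1 D i k)))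
                                      (csum n (fun j => Cmul (mmul n D Y2 k j) (D j k)))))
      by (intros k Hk; rewrite Q1, Q2 by auto; reflexivity).
    rewrite csum_add, (csum_swap n n (fun k j => Cmul (mmul n D Y2 k j) (D j k))), <- csum_add.
    apply csum_zero; intros k Hk. rewrite <- csum_add. apply csum_zero; intros i Hi.
    transitivity (Cmul (D k i) (Cadd (mmul n Y1 D i k) (mmul n D Y2 i k))); [ring|].
    rewrite E0 by auto; ring. }
  intros i k Hi Hk.
  assert (Z1 := proj2 P1 (col k)). assert (Z2 := proj2 P2 (col k)).
  assert (Z : Cre (Cadd (quad n Y1 (col k)) (quad n Y2 (col k))) = 0).
  { apply (csum_re_zero n (fun k => Cadd (quad n Y1 (col k)) (quad n Y2 (col k)))); auto.
    - intros j _; rewrite Cre_add. pose proof (proj2 P1 (col j)). pose proof (proj2 P2 (col j)). lra.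
    - rewrite Sum0; reflexivity. }
  rewrite Cre_add in Z. split.
  - apply (psd_kernel n Y1 (col k) P1); auto; lra.
  - apply (psd_kernel n Y2 (col k) P2); auto; lra.
Qed.

Lemma psd_sqrt_unique n Y1 Y2 : psd n Y1 -> psd n Y2 ->
  meq n (mmul n Y1 Y1) (mmul n Y2 Y2) -> meq n Y1 Y2.
Proof.
  intros P1 P2 HE i k Hi Hk.
  assert (HD0 : msub Y1 Y2 i k = C0).
  { apply (herm_sq_zero n).
    - intros a b Ha Hb; unfold msub, Csub.
      rewrite (psd_herm n Y1 P1 a b), (psd_herm n Y2 P2 a b), Cconj_add, Cconj_opp by auto.
      reflexivity.
    - intros j Hj. rewrite mmul_msub_l.
      destruct (psd_sqrt_diff_kernel n Y1 Y2 P1 P2 HE j j Hj Hj) as [-> ->].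
      unfold Csub; ring.
    - auto.
    - auto. }
  unfold msub, Csub in HD0.
  transitivity (Cadd (Cadd (Y1 i k) (Copp (Y2 i k))) (Y2 i k)); [ring|].
  rewrite HD0; ring.
Qed.

Lemma trace_norm_val n X Y : psd n Y -> meq n (mmul n Y Y) (mmul n (madj X) X) ->
  trace_norm n X = Cre (mtrace n Y).
Proof.
  intros HY HM. unfold trace_norm.
  destruct (epsilon_spec (inhabits 0) (fun t => exists Y, psd n Y /\
     meq n (mmul n Y Y) (mmul n (madj X) X) /\ t = Cre (mtrace n Y)))
    as [Y' [HY' [HM' ->]]]; [exists (Cre (mtrace n Y)), Y; auto|].
  assert (HYY : meq n Y' Y).
  { apply psd_sqrt_unique; auto. intros i j Hi Hj. rewrite HM', HM by auto. reflexivity. }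
  unfold mtrace. f_equal. apply csum_ext; intros i Hi; auto.
Qed.

Lemma trace_norm_exists n X : exists Y, psd n Y /\ meq n (mmul n Y Y) (mmul n (madj X) X).
Proof. apply SpectralRoot.psd_sqrt_exists, gram_psd. Qed.

Lemma trace_norm_meq n X X' : meq n X X' -> trace_norm n X = trace_norm n X'.
Proof.
  intros H. destruct (trace_norm_exists n X) as [Y [HY HM]].
  rewrite (trace_norm_val n X Y), (trace_norm_val n X' Y); auto.
  intros i j Hi Hj. rewrite HM by auto. apply mmul_meq; auto. apply madj_meq; auto.
Qed.

Lemma psd_diag_congr N X (c : Vec) : psd N X ->
  psd N (fun p p' => Cmul (Cconj (c p)) (Cmul (X p p') (c p'))).
Proof.
  intros HX. split.
  - intros p p' Hp Hp'. rewrite !Cconj_mul, Cconj_invol, (psd_herm N X HX p p') by auto. ring.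
  - intros u. replace (quad N _ u) with (quad N X (fun p => Cmul (c p) (u p))); [apply HX|].
    unfold quad. apply csum_ext; intros p _; apply csum_ext; intros p' _.
    rewrite Cconj_mul. ring.
Qed.

(** Schur-type product: entrywise products of reindexed positive semidefinite matrices
    are positive semidefinite (write [A = R^dagger R] with [R] the square root of [A]). *)
Lemma psd_entrywise_product N r q A B f g : psd r A -> psd q B ->
  (forall p, (p < N)%nat -> (f p < r)%nat /\ (g p < q)%nat) ->
  psd N (fun p p' => Cmul (A (f p) (f p')) (B (g p) (g p'))).
Proof.
  intros HA HB Hfg. destruct (SpectralRoot.psd_sqrt_exists r A HA) as [R [HR HRR]].
  apply psd_meq with (X := fun p p' => csum r (fun l =>
     Cmul (Cconj (R l (f p))) (Cmul (B (g p) (g p')) (R l (f p'))))).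
  - apply psd_csum; intros l Hl. apply psd_diag_congr.
    apply (psd_reindex N q B g HB). intros; apply Hfg; auto.
  - intros p p' Hp Hp'. destruct (Hfg p Hp), (Hfg p' Hp').
    rewrite <- HRR by auto. unfold mmul. rewrite <- csum_mul_r.
    apply csum_ext; intros l Hl. rewrite (psd_herm r R HR (f p) l) by auto. ring.
Qed.

Definition kron (m : nat) (A B : Mat) : Mat :=
  fun p q => Cmul (A (p / m)%nat (q / m)%nat) (B (p mod m) (q mod m)).
Definition ptr (k n : nat) (X : Mat) : Mat :=
  fun c d => mtrace n (fun a b => X (c * n + a)%nat (d * n + b)%nat).

Lemma kron_psd k m A B : psd k A -> psd m B -> psd (k * m) (kron m A B).
Proof. intros; apply psd_entrywise_product with (r := k) (q := m); auto. intros; apply divmod_lt; auto. Qed.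

Lemma kron_trace k m A B : mtrace (k * m) (kron m A B) = Cmul (mtrace k A) (mtrace m B).
Proof.
  unfold mtrace, kron. rewrite csum_prod, csum_mul2. apply csum_ext; intros c Hc.
  apply csum_ext; intros i Hi. destruct (divmod_comb c m i Hi) as [-> ->]. reflexivity.
Qed.

Lemma kron_mul k m A B A' B' p q :
  mmul (k * m) (kron m A B) (kron m A' B') p q = kron m (mmul k A A') (mmul m B B') p q.
Proof.
  unfold mmul, kron. rewrite csum_prod, csum_mul2. apply csum_ext; intros c Hc.
  apply csum_ext; intros i Hi. destruct (divmod_comb c m i Hi) as [-> ->]. ring.
Qed.

Lemma kron_meq k m A A' B B' : meq k A A' -> meq m B B' ->
  meq (k * m) (kron m A B) (kron m A' B').
Proof.
  intros H1 H2 p q Hp Hq. destruct (divmod_lt p k m Hp), (divmod_lt q k m Hq).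
  unfold kron. rewrite H1, H2 by auto. reflexivity.
Qed.

(** Tensoring with a state does not change the trace norm:
    [sqrt((rho (x) W)^dagger (rho (x) W)) = rho (x) sqrt(W^dagger W)] and [Tr rho = 1]. *)
Lemma trace_norm_kron k m rho W : state k rho ->
  trace_norm (k * m) (kron m rho W) = trace_norm m W.
Proof.
  intros [Hr Ht]. destruct (trace_norm_exists m W) as [Y [HY HYY]].
  rewrite (trace_norm_val m W Y HY HYY).
  rewrite (trace_norm_val (k * m) (kron m rho W) (kron m rho Y)).
  - rewrite kron_trace, Ht. unfold Cre, Cmul, C1; simpl. ring.
  - apply kron_psd; auto.
  - intros p q Hp Hq. rewrite kron_mul.
    transitivity (kron m (mmul k (madj rho) rho) (mmul m (madj W) W) p q).
    + refine (kron_meq k m _ _ _ _ _ _ p q Hp Hq); auto. apply mmul_meq; [|intros i j; auto].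
      intros i j Hi Hj. unfold madj. rewrite (psd_herm k rho Hr j i), Cconj_invol by auto.
      reflexivity.
    + rewrite <- kron_mul. unfold mmul. apply csum_ext; intros r _.
      unfold madj, kron. rewrite Cconj_mul. reflexivity.
Qed.

Lemma ptr_psd k n X : psd (k * n) X -> psd k (ptr k n X).
Proof.
  intros HX. apply psd_csum with (F := fun a c d => X (c * n + a)%nat (d * n + a)%nat).
  intros a Ha. apply (psd_reindex k (k * n) X (fun c => (c * n + a)%nat) HX). intros; nia.
Qed.

Lemma ptr_trace k n X : mtrace k (ptr k n X) = mtrace (k * n) X.
Proof. unfold mtrace at 2. rewrite csum_prod. reflexivity. Qed.

Lemma marginal_state k n v : unit_vec (k * n) v -> state k (ptr k n (proj v)).
Proof.
  intros Hu. split.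
  - apply ptr_psd, proj_psd.
  - rewrite ptr_trace. apply unit_trace; auto.
Qed.

Lemma kron_state k m A B : state k A -> state m B -> state (k * m) (kron m A B).
Proof.
  intros [HA tA] [HB tB]. split; [apply kron_psd; auto|].
  rewrite kron_trace, tA, tB. unfold Cmul, C1; simpl; f_equal; ring.
Qed.

Lemma Rbar_le_refl x : Rbar_le x x.
Proof. destruct x; simpl; auto; lra. Qed.

Lemma Rbar_le_trans x y z : Rbar_le x y -> Rbar_le y z -> Rbar_le x z.
Proof. destruct x, y, z; simpl; auto; try lra; tauto. Qed.

Lemma Rbar_le_antisym x y : Rbar_le x y -> Rbar_le y x -> x = y.
Proof. destruct x, y; simpl; intros; try tauto. f_equal; lra. Qed.

Lemma sup_exists S : exists s, is_sup S s.
Proof.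
  destruct (classic (S PInf)) as [HP|HP].
  { exists PInf; split; [intros x _; destruct x; simpl; auto | intros u Hu; apply Hu; auto]. }
  destruct (classic (exists r, S (Fin r))) as [[r0 Hr0]|HN].
  2:{ exists MInf; split; [|intros; simpl; auto].
      intros [r| |] Hx; simpl; [exfalso; eauto | exfalso; auto | auto]. }
  destruct (classic (exists M, forall r, S (Fin r) -> r <= M)) as [[M HM]|HU].
  - destruct (completeness (fun r => S (Fin r))) as [l [Hl1 Hl2]];
      [exists M; intros r Hr; apply HM; auto | exists r0; auto |].
    exists (Fin l); split.
    + intros [r| |] Hx; simpl; [exact (Hl1 r Hx) | contradiction | auto].
    + intros [u| |] Hu; simpl; auto.
      * apply Hl2. intros x Hx. apply (Hu (Fin x)); auto.
      * apply (Hu (Fin r0)); auto.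
  - exists PInf; split; [intros x _; destruct x; simpl; auto|].
    intros [u| |] Hu; simpl; auto.
    + apply HU; exists u; intros x Hx; apply (Hu (Fin x)); auto.
    + apply (Hu (Fin r0)); auto.
Qed.

Lemma inf_exists S : exists s, is_inf S s.
Proof.
  destruct (classic (S MInf)) as [HM|HM].
  { exists MInf; split; [intros x _; destruct x; simpl; auto | intros u Hu; apply Hu; auto]. }
  destruct (classic (exists r, S (Fin r))) as [[r0 Hr0]|HN].
  2:{ exists PInf; split; [|intros u _; destruct u; simpl; auto].
      intros [r| |] Hx; simpl; auto; exfalso; eauto. }
  destruct (classic (exists M, forall r, S (Fin r) -> M <= r)) as [[M HMb]|HU].
  - destruct (completeness (fun r => S (Fin (- r)))) as [l [Hl1 Hl2]].
    { exists (- M); intros r Hr; specialize (HMb _ Hr); lra. }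
    { exists (- r0); rewrite Ropp_involutive; auto. }
    exists (Fin (- l)); split.
    + intros [r| |] Hx; simpl; [|auto|contradiction].
      assert (- r <= l) by (apply Hl1; rewrite Ropp_involutive; auto). lra.
    + intros [u| |] Hu; simpl; auto.
      * assert (l <= - u); [|lra]. apply Hl2. intros x Hx.
        pose proof (Hu (Fin (- x)) Hx). simpl in *. lra.
      * apply (Hu (Fin r0)); auto.
  - exists MInf; split; [intros x _; destruct x; simpl; auto|].
    intros [u| |] Hu; simpl; auto.
    + apply HU; exists u; intros x Hx; apply (Hu (Fin x)); auto.
    + apply (Hu (Fin r0)); auto.
Qed.

Lemma sup_ub S x : S x -> Rbar_le x (Rbar_sup S).
Proof. intros; apply (proj1 (epsilon_spec _ _ (sup_exists S))); auto. Qed.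
Lemma sup_least S u : (forall x, S x -> Rbar_le x u) -> Rbar_le (Rbar_sup S) u.
Proof. intros; apply (proj2 (epsilon_spec _ _ (sup_exists S))); auto. Qed.
Lemma inf_lb S x : S x -> Rbar_le (Rbar_inf S) x.
Proof. intros; apply (proj1 (epsilon_spec _ _ (inf_exists S))); auto. Qed.
Lemma inf_greatest S u : (forall x, S x -> Rbar_le u x) -> Rbar_le u (Rbar_inf S).
Proof. intros; apply (proj2 (epsilon_spec _ _ (inf_exists S))); auto. Qed.

Lemma sup_singleton S t : S t -> (forall x, S x -> x = t) -> Rbar_sup S = t.
Proof.
  intros H1 H2. apply Rbar_le_antisym; [apply sup_least | apply sup_ub; auto].
  intros x Hx; rewrite (H2 x Hx); apply Rbar_le_refl.
Qed.

Lemma inf_eq S T : (forall a, S a -> exists b, T b /\ Rbar_le b a) ->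
  (forall b, T b -> exists a, S a /\ Rbar_le a b) -> Rbar_inf S = Rbar_inf T.
Proof.
  intros H1 H2. apply Rbar_le_antisym; apply inf_greatest.
  - intros b Hb. destruct (H2 b Hb) as [a [Ha Hab]]. eapply Rbar_le_trans; [apply inf_lb|]; eauto.
  - intros a Ha. destruct (H1 a Ha) as [b [Hb Hba]]. eapply Rbar_le_trans; [apply inf_lb|]; eauto.
Qed.

Lemma ln_le0 x : Rbar_le (Rbar_ln x) (Fin 0) -> forall t, Rbar_le (Fin t) x -> t <= 1.
Proof.
  intros H t Ht. destruct x as [r| |]; simpl in *; try tauto.
  destruct (Rlt_dec 0 r); simpl in H; [|lra].
  destruct (Rle_lt_dec r 1); [lra|].
  assert (Hl : ln 1 < ln r) by (apply ln_increasing; lra). rewrite ln_1 in Hl. lra.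
Qed.

Lemma ln_fin_le0 t : t <= 1 -> Rbar_le (Rbar_ln (Fin t)) (Fin 0).
Proof.
  intros H; simpl. destruct (Rlt_dec 0 t); simpl; auto.
  destruct (Req_dec t 1); [subst; rewrite ln_1; lra|].
  assert (Hl : ln t < ln 1) by (apply ln_increasing; lra). rewrite ln_1 in Hl; lra.
Qed.

Lemma mtrace_ptB N a b X : mtrace N (ptB a b X) = mtrace N X.
Proof. unfold mtrace, ptB. apply csum_ext; intros p Hp. rewrite divmod_id. reflexivity. Qed.

Lemma ptB_meq a b X Y : meq (a * b) X Y -> meq (a * b) (ptB a b X) (ptB a b Y).
Proof.
  intros H p q Hp Hq. unfold ptB. destruct (divmod_lt p a b Hp), (divmod_lt q a b Hq).
  apply H; nia.
Qed.

Lemma idtensor1 n m E X : meq m (idtensor 1 n m E X) (E X).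
Proof.
  intros p q Hp Hq. unfold idtensor.
  rewrite (Nat.div_small p m), (Nat.div_small q m), (Nat.mod_small p m), (Nat.mod_small q m)
    by auto. reflexivity.
Qed.

Lemma lin_map_vanish n m M X : lin_map n m M ->
  (forall a b, (a < n)%nat -> (b < n)%nat -> X a b = C0) ->
  forall i j, (i < m)%nat -> (j < m)%nat -> M X i j = C0.
Proof.
  intros [Hext [_ Hscale]] HX i j Hi Hj.
  rewrite (Hext X (mscale C0 X)), Hscale by (auto; intros a b Ha Hb; rewrite HX by auto;
    unfold mscale, Cmul, C0; simpl; f_equal; ring).
  unfold mscale, Cmul, C0; simpl; f_equal; ring.
Qed.

Definition e0 : Vec := fun i => if Nat.eq_dec i 0 then C1 else C0.

Lemma e0_unit N : (0 < N)%nat -> unit_vec N e0.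
Proof.
  intros HN. unfold unit_vec. rewrite (csum_single N 0); auto.
  - unfold e0; simpl. unfold Cre, Cmul, Cconj, C1; simpl; ring.
  - intros i Hi Hne. unfold e0. destruct (Nat.eq_dec i 0); [congruence|].
    unfold Cmul, Cconj, C0; simpl; f_equal; ring.
Qed.

Lemma proj_e0_eq x y x' y' : (x = 0 /\ y = 0 <-> x' = 0 /\ y' = 0)%nat ->
  proj e0 x y = proj e0 x' y'.
Proof.
  intros H. unfold proj, e0.
  destruct (Nat.eq_dec x 0), (Nat.eq_dec y 0), (Nat.eq_dec x' 0), (Nat.eq_dec y' 0);
    try (exfalso; tauto); unfold Cmul, Cconj, C0, C1; simpl; f_equal; ring.
Qed.

Lemma ptB_proj_e0 a b : meq (a * b) (ptB a b (proj e0)) (proj e0).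
Proof.
  intros p q _ _. unfold ptB. apply proj_e0_eq.
  pose proof (divmod_id p b). pose proof (divmod_id q b). lia.
Qed.

Section Replacer.
Variables n m : nat.

Lemma idtensor_replacer k W X :
  idtensor k n m (replacer n W) X = kron m (ptr k n X) W.
Proof. reflexivity. Qed.

(** Every input of the diamond norm of a replacer gives [||rho (x) W||_1 = ||W||_1]. *)
Lemma diamond_replacer W : (0 < n)%nat -> diamond n m (replacer n W) = Fin (trace_norm m W).
Proof.
  intros Hn. apply sup_singleton.
  - exists 1%nat, 1%nat, e0. split; [lia|]. split; [lia|]. split; [apply e0_unit; lia|].
    rewrite idtensor_replacer, trace_norm_kron; auto.
    apply marginal_state, e0_unit; lia.
  - intros x [sA [sB [v [_ [_ [Hv ->]]]]]].
    rewrite idtensor_replacer, trace_norm_kron; auto. apply marginal_state; auto.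
Qed.

Lemma replacer_CP W : psd m W -> CP n m (replacer n W).
Proof.
  intros HW. split; [split; [|split]|].
  - intros X Y H i j Hi Hj. unfold replacer, mscale. f_equal.
    unfold mtrace; apply csum_ext; intros; apply H; auto.
  - intros X Y i j Hi Hj. unfold replacer, mscale, madd, mtrace. rewrite csum_add. ring.
  - intros c X i j Hi Hj. unfold replacer, mscale, mtrace. rewrite csum_mul_l. ring.
  - intros k X HX. rewrite idtensor_replacer. apply kron_psd; auto. apply ptr_psd; auto.
Qed.

Lemma append_channel rho : state n rho -> channel m (n * m) (kron m rho).
Proof.
  intros [Hr Ht]. split; [split; [split; [|split]|]|].
  - intros X Y H. apply kron_meq; auto. intros i j _ _; reflexivity.
  - intros X Y p q _ _. unfold kron, madd. ring.
  - intros c X p q _ _. unfold kron, mscale. ring.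
  - intros k X HX.
    apply (psd_entrywise_product (k * (n * m)) n (k * m) rho X
      (fun p => ((p mod (n * m)) / m)%nat)
      (fun p => ((p / (n * m)) * m + (p mod (n * m)) mod m)%nat)); auto.
    intros p Hp. destruct (divmod_lt p k (n * m) Hp) as [H1 H2].
    destruct (divmod_lt (p mod (n * m)) n m H2) as [H3 H4]. split; auto. nia.
  - intros X. rewrite kron_trace, Ht. ring.
Qed.

(** Tracing out the first factor (of size [n]) of [n * m]; outside the output range the
    result is filled with the entries of [W], so that [Tr_n[rho (x) W] = W] holds exactly. *)
Definition trace_out (W : Mat) : Mat -> Mat := fun Y i j =>
  if andb (Nat.ltb i m) (Nat.ltb j m) then csum n (fun s => Y (s * m + i)%nat (s * m + j)%nat)
  else W i j.

Lemma trace_out_in W Y i j : (i < m)%nat -> (j < m)%nat ->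
  trace_out W Y i j = csum n (fun s => Y (s * m + i)%nat (s * m + j)%nat).
Proof.
  intros Hi Hj. unfold trace_out.
  rewrite (proj2 (Nat.ltb_lt i m) Hi), (proj2 (Nat.ltb_lt j m) Hj). reflexivity.
Qed.

Lemma trace_out_kron W rho : mtrace n rho = C1 -> trace_out W (kron m rho W) = W.
Proof.
  intros Ht. apply functional_extensionality; intro i; apply functional_extensionality; intro j.
  unfold trace_out. destruct (Nat.ltb_spec i m) as [Hi|], (Nat.ltb_spec j m) as [Hj|]; simpl; auto.
  unfold kron. rewrite (csum_ext n _ (fun s => Cmul (rho s s) (W i j))).
  - rewrite csum_mul_r. change (csum n (fun s => rho s s)) with (mtrace n rho). rewrite Ht. ring.
  - intros s Hs. destruct (divmod_comb s m i Hi) as [-> ->], (divmod_comb s m j Hj) as [-> ->].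
    reflexivity.
Qed.

Lemma trace_out_channel W : channel (n * m) m (trace_out W).
Proof.
  split; [split; [split; [|split]|]|].
  - intros X Y H i j Hi Hj. rewrite !trace_out_in by auto. apply csum_ext; intros s Hs.
    apply H; nia.
  - intros X Y i j Hi Hj. unfold madd. rewrite !trace_out_in by auto. apply csum_add.
  - intros c X i j Hi Hj. unfold mscale. rewrite !trace_out_in by auto. apply csum_mul_l.
  - intros k X HX.
    apply psd_meq with (X := fun p q => csum n (fun s =>
        X ((p / m) * (n * m) + (s * m + p mod m))%nat ((q / m) * (n * m) + (s * m + q mod m))%nat)).
    + apply psd_csum; intros s Hs. apply (psd_reindex (k * m) (k * (n * m)) X); auto.
      intros p Hp. destruct (divmod_lt p k m Hp). nia.
    + intros p q Hp Hq. unfold idtensor.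
      destruct (divmod_lt p k m Hp), (divmod_lt q k m Hq).
      rewrite trace_out_in by auto. reflexivity.
  - intros X. unfold mtrace at 2. rewrite csum_prod, csum_swap. unfold mtrace.
    apply csum_ext; intros i Hi. rewrite trace_out_in by auto. reflexivity.
Qed.

(** Tracing out the reference from [(id (x) M)(|00><00|)] recovers [M(|0><0|)]:
    the blocks of [|00><00|] off the first one vanish. *)
Lemma trace_out_idtensor_e0 W M : (0 < n)%nat -> lin_map n m M ->
  meq m (trace_out W (idtensor n n m M (proj e0))) (M (proj e0)).
Proof.
  intros Hn HM i j Hi Hj. rewrite trace_out_in by auto.
  assert (Hblock : forall s, (s < n)%nat -> idtensor n n m M (proj e0) (s * m + i)%nat (s * m + j)%nat
                     = M (fun a b => proj e0 (s * n + a)%nat (s * n + b)%nat) i j).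
  { intros s Hs. unfold idtensor.
    destruct (divmod_comb s m i Hi) as [-> ->], (divmod_comb s m j Hj) as [-> ->]. reflexivity. }
  rewrite (csum_single n 0); [rewrite Hblock by auto; reflexivity | lia |].
  intros s Hs Hne. rewrite Hblock by auto. apply (lin_map_vanish n m M); auto.
  intros a b _ _. unfold proj, e0. destruct (Nat.eq_dec (s * n + a) 0); [nia|].
  unfold Cmul, C0; simpl; f_equal; ring.
Qed.
End Replacer.

Section RainsReplacer.
Variables n m : nat.
Hypothesis n_pos : (0 < n)%nat.

(** Upper bound: a replacer with output [sigma] competes in the Rains information;
    every channel output pair is [(rho (x) w, rho (x) sigma)], the image of [(w, sigma)]
    under appending [rho], so monotonicity bounds the channel divergence. *)
Lemma chan_div_replacers D w sigma : gen_div D -> state m w -> psd m sigma ->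
  Rbar_le (chan_div D n m (replacer n w) (replacer n sigma)) (D m w sigma).
Proof.
  intros HD Hw Hs. apply sup_least. intros x [v [Hv ->]].
  rewrite !idtensor_replacer.
  apply (HD m (n * m)%nat (kron m (ptr n n (proj v)))); auto.
  apply append_channel, marginal_state; auto.
Qed.

(** Candidate state for the lower bound: the output of [M] on [|0><0|], computed as the
    reference marginal of [(id (x) M)(|00><00|)]. *)
Definition output_on_e0 (w : Mat) (M : Mat -> Mat) : Mat :=
  trace_out n m w (idtensor n n m M (proj e0)).

Lemma output_on_e0_psd w M : CP n m M -> psd m (output_on_e0 w M).
Proof.
  intros [HL HCP]. apply psd_meq with (M (proj e0)).
  - apply psd_meq with (idtensor 1 n m M (proj e0)); [|apply idtensor1].
    pose proof (HCP 1%nat (proj e0)) as H1. rewrite !Nat.mul_1_l in H1. apply H1, proj_psd.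
  - intros i j Hi Hj. symmetry. apply trace_out_idtensor_e0; auto.
Qed.

(** Lower bound: feeding [|00><00|] and tracing out the reference maps the outputs of
    [N] and [M] to [w] and [output_on_e0 w M]. *)
Lemma chan_div_ge_output D w M : gen_div D -> state m w -> CP n m M ->
  Rbar_le (D m w (output_on_e0 w M)) (chan_div D n m (replacer n w) M).
Proof.
  intros HD Hw [_ HCP].
  assert (Hv : unit_vec (n * n) e0) by (apply e0_unit; nia).
  assert (Hrho : state (n * m) (idtensor n n m (replacer n w) (proj e0))).
  { rewrite idtensor_replacer. apply kron_state; auto. apply marginal_state; auto. }
  apply Rbar_le_trans with (D (n * m)%nat (idtensor n n m (replacer n w) (proj e0))
                                           (idtensor n n m M (proj e0))).
  - unfold output_on_e0. rewrite <- (trace_out_kron n m w (ptr n n (proj e0))) at 1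
      by apply (marginal_state n n e0 Hv).
    apply HD; [apply trace_out_channel | exact Hrho | apply HCP, proj_psd].
  - apply sup_ub. exists e0. split; auto.
Qed.
End RainsReplacer.

Section Bipartite.
Variables dA' dB' dA dB : nat.
Let n := (dA' * dB')%nat.
Let m := (dA * dB)%nat.

(** [T_B o N o T_B'] is the replacer with output [T_B w], as [Tr[T_B' X] = Tr X]. *)
Lemma twisted_replacer w :
  (fun X => ptB dA dB (replacer n w (ptB dA' dB' X))) = replacer n (ptB dA dB w).
Proof.
  apply functional_extensionality; intro X. unfold replacer. rewrite mtrace_ptB. reflexivity.
Qed.

Lemma EN_map_replacer w : (0 < n)%nat ->
  EN_map dA' dB' dA dB (replacer n w) = EN_state dA dB w.
Proof. intros Hn. unfold EN_map, EN_state. fold n m. rewrite twisted_replacer, diamond_replacer; auto. Qed.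

(** A map [M] with [E_N(M) <= 0] has [E_N(M(|0><0|)) <= 0]: [||T_B M(T_B' |0><0|)||_1]
    is one of the values in the diamond norm, and [T_B' |0><0| = |0><0|]. *)
Lemma EN_output_on_e0 w M : (0 < n)%nat -> lin_map n m M ->
  Rbar_le (EN_map dA' dB' dA dB M) (Fin 0) ->
  Rbar_le (EN_state dA dB (output_on_e0 n m w M)) (Fin 0).
Proof.
  intros Hn HL HE. unfold EN_state. fold m. apply ln_fin_le0.
  set (P := fun X => ptB dA dB (M (ptB dA' dB' X))).
  apply (ln_le0 _ HE). apply sup_ub. exists 1%nat, 1%nat, e0.
  split; [lia|]. split; [lia|]. split; [apply e0_unit; simpl; lia|]. f_equal. fold n m P.
  replace ((1 * 1) * m)%nat with m by lia. change (1 * 1)%nat with 1%nat.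
  rewrite (trace_norm_meq m (idtensor 1 n m P (proj e0)) (P (proj e0))) by apply idtensor1.
  apply trace_norm_meq. unfold P, m. apply ptB_meq. fold m.
  intros i j Hi Hj. unfold output_on_e0. rewrite trace_out_idtensor_e0 by auto.
  apply HL; auto. intros a b Ha Hb. symmetry. apply ptB_proj_e0; assumption.
Qed.
End Bipartite.

Theorem mainTheorem7 (D : Div) (dA' dB' dA dB : nat) (w : Mat) :
  gen_div D ->
  (0 < dA')%nat -> (0 < dB')%nat ->
  state (dA * dB)%nat w ->
  EN_map dA' dB' dA dB (replacer (dA' * dB')%nat w) = EN_state dA dB w /\
  rains_map D dA' dB' dA dB (replacer (dA' * dB')%nat w) = rains_state D dA dB w.
Proof.
  intros HD HA' HB' Hw. assert (Hn : (0 < dA' * dB')%nat) by nia.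
  split; [apply EN_map_replacer; auto|].
  apply inf_eq.
  (* each admissible map [M] is beaten by the state [M(|0><0|)] *)
  - intros a [M [HM [HE ->]]].
    exists (D (dA * dB)%nat w (output_on_e0 (dA' * dB') (dA * dB) w M)). split.
    + exists (output_on_e0 (dA' * dB') (dA * dB) w M).
      split; [apply output_on_e0_psd; auto|]. split; [apply EN_output_on_e0; auto; apply HM|].
      reflexivity.
    + apply chan_div_ge_output; auto.
  (* each admissible state [sigma] is beaten by the replacer with output [sigma] *)
  - intros b [sigma [Hs [HE ->]]].
    exists (chan_div D (dA' * dB') (dA * dB) (replacer (dA' * dB') w) (replacer (dA' * dB') sigma)).
    split.
    + exists (replacer (dA' * dB') sigma). split; [apply replacer_CP; auto|].
      split; [rewrite EN_map_replacer; auto | reflexivity].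
    + apply chan_div_replacers; auto.
Qed.
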